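(* For every integer $n>24$, the generalized Petersen graph $GP(n,4)$ is not $2$-distance-balanced.
   Context: For a connected graph $G$ and $x,y\in V(G)$, $d_G(x,y)$ denotes the distance. Let $W_{xy}=\{w\in V(G): d_G(w,x)<d_G(w,y)\}$. $G$ is called $\ell$-distance-balanced if $|W_{xy}|=|W_{yx}|$ for every pair $x,y\in V(G)$ with $d_G(x,y)=\ell$. For integers $n\ge 3$ and $1\le k<n/2$, the generalized Petersen graph $GP(n,k)$ has vertex set $\{u_i: i\in\mathbb{Z}_n\}\cup\{v_i: i\in\mathbb{Z}_n\}$ and edge set $\{u_iu_{i+1}: i\in\mathbb{Z}_n\}\cup\{v_iv_{i+k}: i\in\mathbb{Z}_n\}\cup\{u_iv_i: i\in\mathbb{Z}_n\}$. *)

From mathcomp Require Import all_boot.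
Set Implicit Arguments. Unset Strict Implicit. Unset Printing Implicit Defensive.

Fixpoint ball (T : finType) (e : rel T) (x : T) (m : nat) : {set T} :=
  match m with
  | 0 => [set x]
  | m'.+1 => ball e x m' :|: [set z | [exists y in ball e x m', e y z]]
  end.

(* Graph distance: the least m such that y is within m steps of x.
   (For a connected graph on T this is the usual distance, which is < #|T|;
   for unreachable pairs it returns #|T|, which never matters here since
   GP(n,k) is connected.) *)
Definition gdist (T : finType) (e : rel T) (x y : T) : nat :=
  find (fun m => y \in ball e x m) (iota 0 #|T|).

Definition Wset (T : finType) (e : rel T) (x y : T) : {set T} :=
  [set w | gdist e w x < gdist e w y].

Definition dist_balanced (T : finType) (e : rel T) (l : nat) : Prop :=
  forall x y : T, gdist e x y = l -> #|Wset e x y| = #|Wset e y x|.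

(* Generalized Petersen graph GP(n,k): vertex (false, i) is u_i, (true, i) is v_i,
   indices taken in Z_n. *)
Definition GPvert (n : nat) : finType := (bool * 'I_n)%type.

Definition GPadj (n k : nat) : rel (GPvert n) :=
  fun a b =>
    let i := nat_of_ord a.2 in
    let j := nat_of_ord b.2 in
    match a.1, b.1 with
    | false, false => ((i + 1) %% n == j) || ((j + 1) %% n == i)
    | true, true   => ((i + k) %% n == j) || ((j + k) %% n == i)
    | _, _         => i == j
    end.
Arguments GPadj : clear implicits.

(* Take x = u_0 and y = v_4, which are at distance 2.  A walk in GP(n,4) moves along the
   rim by steps of 1, along the inner cycle by steps of 4, and switches between them by
   spokes, so the distance between two vertices whose indices differ by j is the least
   |a| + |b| + (number of spokes) over integers a, b with a + 4 b = j (mod n); this gives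
   a closed formula for every distance.  For n > 32 the reflection i |-> 4 - i maps the
   inner vertices of W_xy to rim vertices of W_yx; patched at the finitely many vertices of
   W_xy near x, it injects W_xy into W_yx minus v_20, so |W_xy| < |W_yx|.  For
   25 <= n <= 32 both sets are counted with the formula. *)

From mathcomp Require Import all_boot zify.
From Stdlib Require Import ZArith Lia.

Set Implicit Arguments. Unset Strict Implicit. Unset Printing Implicit Defensive.

Section Distance.
Variables (T : finType) (e : rel T).

Lemma mem_ball_path x m z :
  z \in ball e x m <-> exists p, [/\ path e x p, last x p = z & size p <= m].
Proof.
elim: m z => [|m IHm] z /=.
  rewrite inE; split => [/eqP ->|[p [_ <-]]]; first by exists [::].
  by case: p.
rewrite inE; split.
  case/orP => [/IHm [p [ep <- sp]]|]; first by exists p; rewrite ep ltnW.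
  rewrite inE => /existsP [y /andP [/IHm [p [ep <- sp]] eyz]].
  by exists (rcons p z); rewrite rcons_path last_rcons size_rcons ep eyz.
case=> p [ep <-]; rewrite leq_eqVlt ltnS => /orP [/eqP sp|sp]; last first.
  by apply/orP; left; apply/IHm; exists p.
move: sp ep; case/lastP: p => [//|p y] /eqP; rewrite size_rcons eqSS => /eqP sp.
rewrite rcons_path last_rcons => /andP [ep ey]; apply/orP; right.
rewrite inE; apply/existsP; exists (last x p); rewrite ey andbT; apply/IHm.
by exists p; rewrite ep sp.
Qed.

Lemma mem_ball_bellman (C : T -> nat -> Prop) t :
  (forall w y m, e w y -> C y m -> C w m.+1) ->
  (forall w m, C w m.+1 -> w = t \/ exists2 y, e w y & C y m) ->
  (forall w, C w 0 <-> w = t) ->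
  (forall w m, C w m -> C w m.+1) ->
  forall w m, t \in ball e w m <-> C w m.
Proof.
move=> C_step C_split C0 C_mono w m; rewrite mem_ball_path; split.
  case=> p [ep lp sp]; rewrite -(subnKC sp).
  elim: (m - size p) => [|k IHk]; last by rewrite addnS; apply: C_mono.
  rewrite addn0; elim: p w ep lp {sp} => [|y p IHp] w /=; first by move=> _ /C0.
  by case/andP => ewy ep lp; apply: C_step ewy (IHp y ep lp).
elim: m w => [|m IHm] w Cw; first by exists [::]; rewrite (iffLR (C0 w) Cw).
case: (C_split _ _ Cw) => [->|[y ewy /IHm [p [ep lp sp]]]]; first by exists [::].
by exists (y :: p); rewrite /= ewy ep lp.
Qed.

Lemma gdist_eq w t d :
  (forall m, t \in ball e w m <-> d <= m) -> d < #|T| -> gdist e w t = d.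
Proof.
move=> ballE lt_d; rewrite /gdist; have -> : #|T| = d + (#|T| - d.+1).+1 by lia.
rewrite iotaD find_cat size_iota.
have -> : has (fun m => t \in ball e w m) (iota 0 d) = false.
  by apply/hasP => -[m]; rewrite mem_iota add0n => /andP [_ ltmd] /ballE; lia.
by have /ballE /= -> := leqnn d; rewrite addn0.
Qed.

End Distance.

(* The least |a| + |b| over integers a, b with a + 4 b = j. *)
Definition cost14 (j : nat) : nat := j %/ 4 + minn (j %% 4) (5 - j %% 4).

Definition mixed_cost (n j : nat) : nat := minn (cost14 j) (cost14 (n - j)).

Definition rim_cost (n j : nat) : nat := minn j (n - j).

(* The value [n] stands for "no walk": it exceeds every distance in GP(n,4). *)
Definition steps4 (n x : nat) : nat := if x %% 4 == 0 then x %/ 4 else n.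

Definition inner_cost (n j : nat) : nat := minn (steps4 n j) (steps4 n (n - j)).

(* The distance in GP(n,4) from a vertex of kind [s] to a vertex of kind [t] whose index
   is [j] less modulo [n]; the kind [false] is the rim (u) and [true] the inner cycle (v). *)
Definition gp4_dist (n : nat) (s t : bool) (j : nat) : nat :=
  if s == t then minn (if s then inner_cost n j else rim_cost n j) (mixed_cost n j + 2)
  else (mixed_cost n j).+1.

Section Displacements.
Local Open Scope Z_scope.

(* Some walk of length at most [m] leads from a vertex of kind [s] to one of kind [t], with
   rim steps summing to [a] and inner steps summing to [4 b]: such a walk has length
   |a| + |b| plus its number of spokes, which is odd iff [s != t] and can be zero only if
   the walk never leaves its cycle. *)
Definition short_walk (s t : bool) (a b m : Z) : Prop :=
  if s == t then
    (if s then a else b) = 0 /\ Z.abs (if s then b else a) <= m \/ Z.abs a + Z.abs b + 2 <= m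
  else Z.abs a + Z.abs b + 1 <= m.

Lemma short_walk0 s t a b : short_walk s t a b 0 <-> [/\ s = t, a = 0 & b = 0].
Proof.
rewrite /short_walk; split.
  by case: s t => [] [] /= walk; first [split => //; lia | exfalso; lia].
by case=> <- -> ->; rewrite eqxx; left; case: s.
Qed.

Lemma short_walk_mono s t a b m : short_walk s t a b m -> short_walk s t a b (m + 1).
Proof. by rewrite /short_walk; case: s t => [] [] /=; lia. Qed.

Lemma short_walk_spoke s t a b m : short_walk (~~ s) t a b m -> short_walk s t a b (m + 1).
Proof. by rewrite /short_walk; case: s t => [] [] /=; lia. Qed.

Lemma short_walk_cycle s t a b m d : (d = 1 \/ d = -1) -> short_walk s t a b m ->
  short_walk s t (if s then a else a + d) (if s then b + d else b) (m + 1).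
Proof. by rewrite /short_walk; case: s t => [] [] /=; lia. Qed.

Lemma short_walk_succ s t a b m : short_walk s t a b (m + 1) ->
  [/\ s = t, a = 0 & b = 0] \/ short_walk (~~ s) t a b m \/
  exists2 d, (d = 1 \/ d = -1) &
    short_walk s t (if s then a else a + d) (if s then b + d else b) m.
Proof.
rewrite /short_walk => walk.
have [own0|own_nz] := Z.eq_dec (if s then b else a) 0; last first.
  right; right; exists (- Z.sgn (if s then b else a)).
    by case: s walk own_nz; lia.
  by case: s t walk own_nz => [] [] /=; lia.
have [a0|a_nz] := Z.eq_dec a 0; have [b0|b_nz] := Z.eq_dec b 0.
all: case: s t walk own0 => [] [] /= walk own0.
all: by [left; split => //; lia | right; left; lia].
Qed.

Lemma cost14_le a b x : Z.of_nat x = a + 4 * b -> Z.of_nat (cost14 x) <= Z.abs a + Z.abs b.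
Proof. rewrite /cost14; lia. Qed.

Lemma cost14_attained x :
  exists a b, Z.of_nat x = a + 4 * b /\ Z.of_nat (cost14 x) = Z.abs a + Z.abs b.
Proof.
rewrite /cost14; have [r_le2|r_gt2] := leqP (x %% 4) 2.
  by exists (Z.of_nat (x %% 4)), (Z.of_nat (x %/ 4)); lia.
by exists (-1), (Z.of_nat (x %/ 4) + 1); lia.
Qed.

End Displacements.

Lemma mixed_cost_small n j : 23 < n -> j <= n -> 4 * (mixed_cost n j + 2) <= n.
Proof. rewrite /mixed_cost /cost14; lia. Qed.

Section CyclicCosts.
Variables (n j : nat).
Hypotheses (n_gt23 : 23 < n) (lt_jn : j < n).

Lemma mixed_cost_le (a b k : Z) : Z.of_nat j = (a + 4 * b + k * Z.of_nat n)%Z ->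
  (Z.of_nat (mixed_cost n j) <= Z.abs a + Z.abs b)%Z.
Proof.
move=> def_j; have := mixed_cost_small n_gt23 (ltnW lt_jn); rewrite /mixed_cost.
have [|[|]] : k = 0%Z \/ k = 1%Z \/ (Z.of_nat n <= Z.abs (a + 4 * b))%Z by nia.
- by move=> k0; have := @cost14_le a b j; lia.
- by move=> k1; have := @cost14_le (- a) (- b) (n - j); lia.
- lia.
Qed.

Lemma mixed_cost_attained : exists a b k : Z,
  Z.of_nat j = (a + 4 * b + k * Z.of_nat n)%Z /\
  Z.of_nat (mixed_cost n j) = (Z.abs a + Z.abs b)%Z.
Proof.
have [a1 [b1 [def_j cost_j]]] := cost14_attained j.
have [a2 [b2 [def_nj cost_nj]]] := cost14_attained (n - j).
rewrite /mixed_cost; have [le_c|lt_c] := leqP (cost14 j) (cost14 (n - j)).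
  by exists a1, b1, 0%Z; lia.
by exists (- a2)%Z, (- b2)%Z, 1%Z; lia.
Qed.

Lemma rim_cost_le (a k : Z) : Z.of_nat j = (a + k * Z.of_nat n)%Z ->
  (Z.of_nat (minn (rim_cost n j) (mixed_cost n j + 2)) <= Z.abs a)%Z.
Proof.
move=> def_j; have := mixed_cost_small n_gt23 (ltnW lt_jn); rewrite /rim_cost.
have [|[|]] : k = 0%Z \/ k = 1%Z \/ (Z.of_nat n <= Z.abs a)%Z by nia.
all: lia.
Qed.

Lemma inner_cost_le (b k : Z) : Z.of_nat j = (4 * b + k * Z.of_nat n)%Z ->
  (Z.of_nat (minn (inner_cost n j) (mixed_cost n j + 2)) <= Z.abs b)%Z.
Proof.
move=> def_j; have := mixed_cost_small n_gt23 (ltnW lt_jn); rewrite /inner_cost /steps4.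
have [|[|]] : k = 0%Z \/ k = 1%Z \/ (Z.of_nat n <= 4 * Z.abs b)%Z by nia.
all: by case: ifP => /eqP; case: ifP => /eqP; lia.
Qed.

Lemma gp4_dist_leP s t m : gp4_dist n s t j <= m <->
  exists a b k : Z, Z.of_nat j = (a + 4 * b + k * Z.of_nat n)%Z /\
    short_walk s t a b (Z.of_nat m).
Proof.
have small := mixed_cost_small n_gt23 (ltnW lt_jn).
rewrite /gp4_dist /short_walk; split.
  have [a [b [k [def_j cost_ab]]]] := mixed_cost_attained.
  case: eqP => [_|_] le_dm; last by exists a, b, k; split => //; lia.
  move: le_dm; rewrite geq_min => /orP [|le_dm]; last first.
    by exists a, b, k; split => //; right; lia.
  case: s; cbv iota; rewrite ?geq_min /inner_cost /rim_cost /steps4.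
  - case/orP; case: ifP => /eqP r0 le_dm.
    + by exists 0%Z, (Z.of_nat (j %/ 4)), 0%Z; lia.
    + by exists a, b, k; split => //; right; lia.
    + by exists 0%Z, (- Z.of_nat ((n - j) %/ 4))%Z, 1%Z; lia.
    + by exists a, b, k; split => //; right; lia.
  - case/orP => le_dm.
      by exists (Z.of_nat j), 0%Z, 0%Z; lia.
    by exists (Z.of_nat j - Z.of_nat n)%Z, 0%Z, 1%Z; lia.
case=> a [b [k [def_j]]]; case: eqP => [_|_]; last by have := mixed_cost_le def_j; lia.
case=> [[own0 le_own]|le_ab]; last by have := mixed_cost_le def_j; lia.
case: s own0 le_own => own0 le_own; rewrite own0 in def_j.
- by have := @inner_cost_le b k; lia.
- by have := @rim_cost_le a k; lia.
Qed.

End CyclicCosts.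

Definition ord_mod (n : nat) (n_gt0 : 0 < n) (x : nat) : 'I_n := Ordinal (ltn_pmod x n_gt0).

Definition cycle_step (s : bool) : nat := if s then 4 else 1.

Lemma GPadj_cycle n s (i j : 'I_n) :
  GPadj n 4 (s, i) (s, j) = ((i + cycle_step s) %% n == j) || ((j + cycle_step s) %% n == i).
Proof. by case: s. Qed.

Lemma GPadj_spoke n s t (i j : 'I_n) : s != t -> GPadj n 4 (s, i) (t, j) = (i == j :> nat).
Proof. by case: s t => [] []. Qed.

Section GP4Distance.
Variable n : nat.
Hypothesis n_gt23 : 23 < n.

Let n_gt0 : 0 < n. Proof. exact: leq_trans n_gt23. Qed.

Lemma Z_of_modn x : exists c : Z, Z.of_nat (x %% n) = (Z.of_nat x + c * Z.of_nat n)%Z.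
Proof. by exists (- Z.of_nat (x %/ n))%Z; have := divn_eq x n; lia. Qed.

Lemma GPadj_shift s t (i j : 'I_n) : GPadj n 4 (s, i) (t, j) ->
  s != t /\ val i = val j \/
  s = t /\ exists d c : Z, (d = 1 \/ d = -1)%Z /\
    Z.of_nat j = (Z.of_nat i + d * Z.of_nat (cycle_step s) + c * Z.of_nat n)%Z.
Proof.
have [<-|neq_st] := eqVneq s t; last by rewrite GPadj_spoke // => /eqP; left.
rewrite GPadj_cycle => /orP [] /eqP def; right; split => //.
  by have [c Ec] := Z_of_modn (i + cycle_step s); exists 1%Z, c; rewrite -def; lia.
have [c Ec] := Z_of_modn (j + cycle_step s).
by exists (-1)%Z, (- c)%Z; rewrite def in Ec; lia.
Qed.

Lemma GPadj_cycle_exists s (i : 'I_n) (d : Z) : (d = 1 \/ d = -1)%Z ->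
  exists2 j : 'I_n, GPadj n 4 (s, i) (s, j) &
    exists c : Z, Z.of_nat j = (Z.of_nat i + d * Z.of_nat (cycle_step s) + c * Z.of_nat n)%Z.
Proof.
have lt_i := ltn_ord i.
have step_small : cycle_step s < n by rewrite /cycle_step; case: s; lia.
case=> ->.
  exists (ord_mod n_gt0 (i + cycle_step s)); first by rewrite GPadj_cycle eqxx.
  by have [c Ec] := Z_of_modn (i + cycle_step s); exists c; rewrite Ec; lia.
exists (ord_mod n_gt0 (i + n - cycle_step s)).
  by rewrite GPadj_cycle /= modnDml subnK ?modnDr ?(modn_small lt_i) ?eqxx ?orbT //; lia.
by have [c Ec] := Z_of_modn (i + n - cycle_step s); exists (c + 1)%Z; rewrite Ec; lia.
Qed.

Definition within (v w : GPvert n) (m : nat) : Prop :=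
  exists a b k : Z, Z.of_nat w.2 = (Z.of_nat v.2 + a + 4 * b + k * Z.of_nat n)%Z /\
    short_walk w.1 v.1 a b (Z.of_nat m).

Lemma withinE v w m : within v w m <-> gp4_dist n w.1 v.1 ((w.2 + n - v.2) %% n) <= m.
Proof.
have lt_i := ltn_ord w.2; have lt_p := ltn_ord v.2.
have [c Ec] := Z_of_modn (w.2 + n - v.2).
rewrite gp4_dist_leP ?ltn_pmod //; split => -[a [b [k [def walk]]]].
  by exists a, b, (k + c + 1)%Z; split => //; lia.
by exists a, b, (k - c - 1)%Z; split => //; lia.
Qed.

Lemma within0 v w : within v w 0 <-> w = v.
Proof.
case: v w => [t p] [s i]; split => [[a [b [k [def /short_walk0 [eq_st a0 b0]]]]]|[-> ->]].
  have lt_i := ltn_ord i; have lt_p := ltn_ord p.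
  cbn [fst snd] in def, eq_st; congr pair => //; apply: ord_inj; subst a b.
  have k0 : k = 0%Z by nia.
  lia.
by exists 0%Z, 0%Z, 0%Z; split; [lia | apply/short_walk0].
Qed.

Lemma within_mono v w m : within v w m -> within v w m.+1.
Proof.
case=> a [b [k [def walk]]]; exists a, b, k; split => //.
by rewrite Nat2Z.inj_succ; apply: short_walk_mono.
Qed.

Lemma within_step v w y m : GPadj n 4 w y -> within v y m -> within v w m.+1.
Proof.
case: w y => [s i] [s' j] adj [a [b [k [def walk]]]].
case: (GPadj_shift adj) => [[neq_s eq_ij]|[eq_s [d [c [unit_d def_j]]]]].
  exists a, b, k; rewrite Nat2Z.inj_succ; split; first by rewrite /= eq_ij.
  by apply: short_walk_spoke; case: s s' neq_s walk {adj def} => [] [].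
subst s'; exists (if s then a else a - d)%Z, (if s then b - d else b)%Z, (k - c)%Z.
rewrite Nat2Z.inj_succ; split; last by apply: short_walk_cycle walk; lia.
by move: def def_j; rewrite /cycle_step; cbn [fst snd]; case: s {adj walk}; lia.
Qed.

Lemma within_split v w m :
  within v w m.+1 -> w = v \/ exists2 y, GPadj n 4 w y & within v y m.
Proof.
case: w => s i [a [b [k [def]]]]; rewrite Nat2Z.inj_succ => /short_walk_succ.
case=> [[eq_st a0 b0]|[spoke|[d unit_d cycle]]].
- by left; apply/within0; exists a, b, k; split => //; apply/short_walk0.
- right; exists (~~ s, i); first by rewrite GPadj_spoke ?eqxx //; case: (s).
  by exists a, b, k.
- right; have [j adj [c def_j]] := GPadj_cycle_exists s i unit_d.
  exists (s, j) => //; exists (if s then a else a + d)%Z, (if s then b + d else b)%Z, (k + c)%Z.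
  split => //; move: def def_j; rewrite /cycle_step; cbn [fst snd].
  by case: s {adj cycle}; lia.
Qed.

Lemma gp4_dist_le_mixed s t j : gp4_dist n s t j <= mixed_cost n j + 2.
Proof. by rewrite /gp4_dist; case: (s == t); lia. Qed.

Lemma gdist_GP4 v w : gdist (GPadj n 4) w v = gp4_dist n w.1 v.1 ((w.2 + n - v.2) %% n).
Proof.
apply: gdist_eq => [m|].
  rewrite -withinE; apply: mem_ball_bellman m => //.
  - exact: within_step.
  - exact: within_split.
  - exact: within0.
  - exact: within_mono.
have := gp4_dist_le_mixed w.1 v.1 ((w.2 + n - v.2) %% n).
have := mixed_cost_small n_gt23 (ltnW (ltn_pmod (w.2 + n - v.2) n_gt0)).
by rewrite card_prod card_bool card_ord; lia.
Qed.

End GP4Distance.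

(* The distances from [(s, i)] to x = u_0 and to y = v_4; the index difference
   [(i - 4) mod n] is written without [%%] so that [lia] can reason about it. *)
Definition dist_x (n : nat) (s : bool) (i : nat) : nat := gp4_dist n s false i.

Definition dist_y (n : nat) (s : bool) (i : nat) : nat :=
  gp4_dist n s true (if 4 <= i then i - 4 else i + n - 4).

Definition Wxy (n : nat) : {set GPvert n} :=
  [set w : GPvert n | dist_x n w.1 w.2 < dist_y n w.1 w.2].

Definition Wyx (n : nat) : {set GPvert n} :=
  [set w : GPvert n | dist_y n w.1 w.2 < dist_x n w.1 w.2].

Lemma cost14_bounds x : x <= 4 * cost14 x <= x + 6.
Proof. rewrite /cost14; lia. Qed.

Lemma cost14_shift x y : y = x + 4 -> cost14 y = (cost14 x).+1.
Proof. by move=> ->; rewrite /cost14; lia. Qed.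

Ltac is_numeral x := lazymatch x with O => idtac | S ?y => is_numeral y end.

Ltac split_ifs :=
  repeat match goal with |- context [if ?b then _ else _] => destruct b eqn:?; cbv iota end.

Ltac cost14_normalize :=
  repeat match goal with |- context [cost14 ?x] => match goal with |- context [cost14 ?y] =>
    assert_fails (constr_eq x y);
    first [ rewrite (_ : cost14 y = cost14 x); last by apply: congr1; lia
          | rewrite (_ : cost14 y = (cost14 x).+1); last by apply: cost14_shift; lia ]
  end end.

(* Decides a comparison of explicit distances: the values of [cost14] become unknowns
   constrained by [cost14_bounds], after identifying those whose arguments are equal or
   differ by 4 and computing those at numerals. *)
Ltac dist_lia :=
  rewrite /dist_x /dist_y; split_ifs;
  rewrite /gp4_dist /mixed_cost /rim_cost /inner_cost /steps4 /= ?add0n;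
  repeat match goal with |- context [?a - (?a - ?b)] =>
    rewrite (_ : a - (a - b) = b); last by lia end;
  split_ifs; cost14_normalize;
  repeat match goal with |- context [cost14 ?x] =>
    first [ let v := eval vm_compute in (cost14 x) in is_numeral v; change (cost14 x) with v
          | move: (cost14_bounds x); generalize (cost14 x) ] end;
  lia.

Section LargeCycle.
Variable n : nat.
Hypothesis n_gt32 : 32 < n.

Lemma dist_y_le_x_rim i : 3 <= i < n - 3 -> dist_y n false i <= dist_x n false i.
Proof. by case/andP => le3i lt_in; dist_lia. Qed.

Lemma dist_y_le_x_inner_near i : i \in [:: 0; 3; 4] -> dist_y n true i <= dist_x n true i.
Proof. by rewrite !inE => /or3P [] /eqP ->; dist_lia. Qed.

Lemma dist_y_le_x_inner_tail i :
  i \in [:: n - 4; n - 8; n - 12; n - 16] -> dist_y n true i <= dist_x n true i.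
Proof. by rewrite !inE => /or4P [] /eqP ->; dist_lia. Qed.

Lemma dist_y_lt_x_inner_mul4 i :
  i \in [:: 4; 8; 12; 16; 20] -> dist_y n true i < dist_x n true i.
Proof. by rewrite !inE => /orP [/eqP ->|/or4P [] /eqP ->]; dist_lia. Qed.

Lemma dist_y_lt_x_rim_mul4 i : i \in [:: 8; 12; 16; 20] -> dist_y n false i < dist_x n false i.
Proof. by rewrite !inE => /or4P [] /eqP ->; dist_lia. Qed.

Lemma dist_y_lt_x_reflect i : 5 <= i < n -> dist_x n true i < dist_y n true i ->
  dist_y n false (n + 4 - i) < dist_x n false (n + 4 - i).
Proof. by case/andP => le5i lt_in; dist_lia. Qed.

(* The reflection [i |-> 4 - i] from the inner cycle to the rim, patched at the vertices
   of [W_xy] near [x]: those go to [v_4, v_8, v_12, v_16, u_8, u_12, u_16, u_20], which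
   the reflection misses by [dist_y_le_x_inner_tail]. *)
Definition reflect_x (w : bool * nat) : bool * nat :=
  let: (s, i) := w in
  if s then
    if i == 1 then (false, 16) else if i == 2 then (false, 20) else (false, n + 4 - i)
  else
    if i == 0 then (true, 4) else if i == 1 then (true, 8) else if i == 2 then (true, 12)
    else if i == n.-1 then (true, 16) else if i == n - 2 then (false, 8) else (false, 12).

Definition reflect_y (w : bool * nat) : bool * nat :=
  let: (s, k) := w in
  if s then
    if k == 4 then (false, 0) else if k == 8 then (false, 1) else if k == 12 then (false, 2)
    else (false, n.-1)
  else
    if k == 8 then (false, n - 2) else if k == 12 then (false, n - 3)
    else if k == 16 then (true, 1) else if k == 20 then (true, 2) else (true, n + 4 - k).

Lemma reflect_xP w : w.2 < n -> dist_x n w.1 w.2 < dist_y n w.1 w.2 ->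
  [/\ (reflect_x w).2 < n,
      dist_y n (reflect_x w).1 (reflect_x w).2 < dist_x n (reflect_x w).1 (reflect_x w).2,
      reflect_y (reflect_x w) = w & reflect_x w != (true, 20)].
Proof.
case: w => s i /= lt_in closer; case: s closer => closer.
  have near : i \notin [:: 0; 3; 4].
    by apply/negP => /dist_y_le_x_inner_near; rewrite leqNgt closer.
  have far : i \notin [:: n - 4; n - 8; n - 12; n - 16].
    by apply/negP => /dist_y_le_x_inner_tail; rewrite leqNgt closer.
  rewrite !inE in near far.
  have [->|[->|le5i]] : i = 1 \/ i = 2 \/ 5 <= i by lia.
  - by split => //=; [lia | apply: dist_y_lt_x_rim_mul4].
  - by split => //=; [lia | apply: dist_y_lt_x_rim_mul4].
  rewrite /= !ifN_eq; try lia.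
  split => //=; first lia; first by apply: dist_y_lt_x_reflect closer; lia.
  by rewrite !ifN_eq ?subKn //; lia.
have near : ~~ (3 <= i < n - 3).
  by apply/negP => /dist_y_le_x_rim; rewrite leqNgt closer.
have : i = 0 \/ i = 1 \/ i = 2 \/ i = n.-1 \/ i = n - 2 \/ i = n - 3 by lia.
case=> [->|[->|[->|[->|[->|->]]]]] /=; rewrite ?eqxx ?ifN_eq /=; try lia.
all: by split => //; first [apply: dist_y_lt_x_inner_mul4 | apply: dist_y_lt_x_rim_mul4 | lia].
Qed.

Let n_gt0 : 0 < n. Proof. exact: leq_trans n_gt32. Qed.

Let lift (w : bool * nat) : GPvert n := (w.1, ord_mod n_gt0 w.2).

Let unlift (w : GPvert n) : bool * nat := (w.1, val w.2).

Let unliftK w : w.2 < n -> unlift (lift w) = w.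
Proof. by case: w => s i lt_in; rewrite /unlift /= modn_small. Qed.

Let liftK : cancel unlift lift.
Proof. by case=> s i; congr pair; apply: val_inj; rewrite /= modn_small. Qed.

Lemma card_Wxy_lt_Wyx_large : #|Wxy n| < #|Wyx n|.
Proof.
pose f w := lift (reflect_x (unlift w)); pose v20 := lift (true, 20).
have fP w : w \in Wxy n -> [/\ (reflect_x (unlift w)).2 < n, f w \in Wyx n,
    reflect_y (reflect_x (unlift w)) = unlift w & f w != v20].
  rewrite inE => /(reflect_xP (w := unlift w) (ltn_ord w.2)); rewrite /f.
  case: (reflect_x (unlift w)) => t k /= [lt_kn closer back ne20]; split => //.
    by rewrite inE /= modn_small.
  have lt_20n : 20 < n by lia.
  by apply: contra ne20 => /eqP [->]; rewrite !modn_small // => ->.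
have f_inj : {in Wxy n &, injective f}.
  apply: (can_in_inj (g := fun w => lift (reflect_y (unlift w)))) => w /fP [lt _ back _].
  by rewrite /f unliftK // back liftK.
have f_sub : f @: Wxy n \subset Wyx n :\ v20.
  by apply/subsetP => _ /imsetP [w /fP [_ Wyx_fw _ ne20] ->]; rewrite in_setD1 ne20.
have v20_Wyx : v20 \in Wyx n.
  by rewrite inE /= modn_small; [apply: dist_y_lt_x_inner_mul4 | lia].
rewrite -(card_in_imset f_inj); have := subset_leq_card f_sub.
by rewrite (cardsD1 v20 (Wyx n)) v20_Wyx; lia.
Qed.

End LargeCycle.

Lemma card_GPvert_pred n (P : bool -> nat -> bool) :
  #|[set w : GPvert n | P w.1 w.2]| = count (P true) (iota 0 n) + count (P false) (iota 0 n).
Proof.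
rewrite -sum1dep_card.
rewrite (eq_bigl (fun w : GPvert n => xpredT w.1 && P w.1 (val w.2))) //.
rewrite -(pair_big_dep xpredT (fun s (i : 'I_n) => P s i) (fun _ _ => 1)).
by rewrite big_bool /= -!(big_mkord (P _) (fun _ => 1)) !sum1_count /index_iota subn0.
Qed.

(* For n <= 32 the targets u_20 and v_20 of the patched reflection can lie outside W_yx,
   so these cycles are counted directly. *)
Lemma card_Wxy_lt_Wyx n : 24 < n -> #|Wxy n| < #|Wyx n|.
Proof.
move=> n_gt24; have [n_gt32|n_le32] := ltnP 32 n; first exact: card_Wxy_lt_Wyx_large.
rewrite (card_GPvert_pred _ (fun s i => dist_x n s i < dist_y n s i)).
rewrite (card_GPvert_pred _ (fun s i => dist_y n s i < dist_x n s i)).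
have small_cases : all (fun m =>
    count (fun i => dist_x m true i < dist_y m true i) (iota 0 m) +
    count (fun i => dist_x m false i < dist_y m false i) (iota 0 m) <
    count (fun i => dist_y m true i < dist_x m true i) (iota 0 m) +
    count (fun i => dist_y m false i < dist_x m false i) (iota 0 m)) (iota 25 8).
  by vm_compute.
by apply: (allP small_cases); rewrite mem_iota; lia.
Qed.

Theorem proposition3p2 (n : nat) : 24 < n -> ~ dist_balanced (GPadj n 4) 2.
Proof.
move=> n_gt24 balanced; have n_gt23 := ltnW n_gt24.
have lt_0n : 0 < n by lia.
have lt_4n : 4 < n by lia.
pose x : GPvert n := (false, Ordinal lt_0n); pose y : GPvert n := (true, Ordinal lt_4n).
have dist_to_x w : gdist (GPadj n 4) w x = dist_x n w.1 w.2.
  by rewrite gdist_GP4 //= subn0 modnDr modn_small.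
have dist_to_y w : gdist (GPadj n 4) w y = dist_y n w.1 w.2.
  rewrite gdist_GP4 //= /dist_y; congr gp4_dist; have lt_in := ltn_ord w.2.
  case: ifP => le4i; last by rewrite modn_small; lia.
  by rewrite -addnBAC // modnDr modn_small //; exact: leq_ltn_trans (leq_subr 4 _) lt_in.
have dist_xy : gdist (GPadj n 4) x y = 2 by rewrite dist_to_y /x /=; dist_lia.
have := balanced x y dist_xy; rewrite /Wset.
have -> : [set w | gdist (GPadj n 4) w x < gdist (GPadj n 4) w y] = Wxy n.
  by apply/setP => w; rewrite !inE dist_to_x dist_to_y.
have -> : [set w | gdist (GPadj n 4) w y < gdist (GPadj n 4) w x] = Wyx n.
  by apply/setP => w; rewrite !inE dist_to_x dist_to_y.
by have := card_Wxy_lt_Wyx n_gt24; lia.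
Qed.
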